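(* Let $k\ge 2$. In the online version of balanced interval $k$-coloring, the imbalance is unbounded: for every (deterministic) online algorithm and every $M\in\mathbb{N}$, there is a finite input sequence of intervals on which the coloring produced by the algorithm has imbalance greater than $M$.
   Context: Online model: closed intervals arrive one at a time in order of their startpoints; upon arrival the full interval (including its endpoint) is revealed and the algorithm must irrevocably assign it a color from $\{1,\dots,k\}$. For a coloring $\chi$ of a finite set of intervals, let $c_i(x)$ be the number of intervals containing $x$ with color $i$; the imbalance of $\chi$ is $\max_{x\in\mathbb{R}}\max_{i,j}|c_i(x)-c_j(x)|$. *)

From HB Require Import structures.
From mathcomp Require Import all_boot all_order all_algebra.
From mathcomp Require Import reals.
Set Implicit Arguments. Unset Strict Implicit. Unset Printing Implicit Defensive.
Import Order.TTheory GRing.Theory Num.Theory.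
Local Open Scope ring_scope.

Definition contains (R : realType) (I : R * R) (x : R) : bool :=
  (I.1 <= x) && (x <= I.2).

Definition valid_input (R : realType) (s : seq (R * R)) : bool :=
  all (fun I : R * R => I.1 <= I.2) s &&
  sorted (fun I J : R * R => I.1 <= J.1) s.

(* A deterministic online k-coloring algorithm: upon arrival of an interval,
   it sees the whole history of intervals so far (ending with the current,
   fully revealed interval) and irrevocably outputs a color in {1..k}
   (represented as 'I_k).  Its previous colors are determined by the
   history, so this captures all deterministic online algorithms. *)
Definition online_algorithm (R : realType) (k : nat) := seq (R * R) -> 'I_k.

Definition online_coloring (R : realType) (k : nat)
  (alg : online_algorithm R k) (s : seq (R * R)) : seq 'I_k :=
  [seq alg (take i.+1 s) | i <- iota 0 (size s)].

Definition color_count (R : realType) (k : nat)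
  (s : seq (R * R)) (chi : seq 'I_k) (i : 'I_k) (x : R) : nat :=
  count (fun p : (R * R) * 'I_k => (p.2 == i) && contains p.1 x) (zip s chi).

(* "imbalance of chi > M", where the imbalance is
   max_x max_{i,j} |c_i(x) - c_j(x)| (the maximum is attained since only
   finitely many values occur, so exceeding M means some x, i, j does). *)
Definition imbalance_gt (R : realType) (k : nat)
  (s : seq (R * R)) (chi : seq 'I_k) (M : nat) : Prop :=
  exists (x : R) (i j : 'I_k),
    (M < `| (color_count s chi i x)%:Z - (color_count s chi j x)%:Z |)%N.

(* A single adversary defeats any algorithm with nested intervals [0, r]:
   the right endpoints bisect an interval (f, p), and an interval colored c
   pulls p down to r while any other color pushes f up to r.  Then every
   c-colored interval contains p and no other does, while all intervals
   contain 0.  If more than M intervals are colored c, the point p has imbalance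
   > M against any other color; otherwise, after more than 2kM intervals, some
   color occurs more than 2M times at 0, i.e. more than M above c. *)
From HB Require Import structures.
From mathcomp Require Import all_boot all_order all_algebra.
From mathcomp Require Import reals.
From mathcomp Require Import zify lra.
Set Implicit Arguments. Unset Strict Implicit. Unset Printing Implicit Defensive.
Import Order.TTheory GRing.Theory Num.Theory.
Local Open Scope ring_scope.

Lemma sum_count_colors (T : Type) (k : nat) (P : pred (T * 'I_k))
    (l : seq (T * 'I_k)) :
  (\sum_(j < k) count (fun q => (q.2 == j) && P q) l)%N = count P l.
Proof.
elim: l => [|q l IHl] /=; first by rewrite big1.
rewrite big_split /= IHl; congr (_ + _)%N.
rewrite (bigD1 q.2) //= eqxx big1 ?addn0 // => j /negbTE neq_j.
by rewrite eq_sym neq_j.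
Qed.

Lemma pigeonhole_sum (k m : nat) (a : 'I_k -> nat) :
  (k * m < \sum_(j < k) a j)%N -> exists j, (m < a j)%N.
Proof.
move=> lt_km_sum; apply/existsP; apply: contraLR lt_km_sum.
rewrite negb_exists -leqNgt => /forallP le_a_m.
rewrite -[k in (k * m)%N]card_ord -sum_nat_const.
by apply: leq_sum => j _; rewrite leqNgt.
Qed.

Section ColorCount.
Variables (R : realType) (k : nat).
Implicit Types (s : seq (R * R)) (chi : seq 'I_k).

Lemma sum_color_count s chi x : (size s <= size chi)%N ->
  (\sum_(j < k) color_count s chi j x)%N = count (fun I => contains I x) s.
Proof.
move=> le_s_chi; rewrite (sum_count_colors (fun q => contains q.1 x)).
by rewrite -[in RHS](unzip1_zip le_s_chi) count_map.
Qed.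

Lemma imbalance_gt_separated s chi (x y : R) (i j : 'I_k) (M : nat) :
  size chi = size s -> (k * (2 * M) < size s)%N -> j != i ->
  all (fun I => contains I x) s ->
  {in zip s chi, forall q, contains q.1 y = (q.2 == i)} ->
  imbalance_gt s chi M.
Proof.
move=> size_chi big_s neq_ji cover_x sep_y.
have no_j : color_count s chi j y = 0%N.
  apply/eqP; rewrite -leqn0 leqNgt -has_count; apply/hasPn => q q_in.
  by rewrite sep_y //; case: eqP => // ->; rewrite (negbTE neq_ji).
have le_i : (color_count s chi i x <= color_count s chi i y)%N.
  rewrite /color_count (@eq_in_count _ (fun q => (q.2 == i) && contains q.1 x)
    (fun q => [&& q.2 == i, contains q.1 x & contains q.1 y])).
    by apply: sub_count => q /and3P[-> _ ->].
  by move=> q q_in /=; rewrite sep_y //; case: (q.2 == i); rewrite ?andbT.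
have [gt_i|le_M] := ltnP M (color_count s chi i y).
  by exists y, i, j; rewrite no_j subr0 absz_nat.
have [j' gt_j'] : exists j', (2 * M < color_count s chi j' x)%N.
  apply: pigeonhole_sum.
  rewrite sum_color_count ?size_chi //.
  by move: cover_x; rewrite all_count => /eqP ->.
exists x, j', i; rewrite subzn ?absz_nat; lia.
Qed.

End ColorCount.

Section StartAtZero.
Variable R : realType.

Definition starts_at_zero (I : R * R) : bool := (I.1 == 0) && (0 <= I.2).

Lemma contains_starts_at_zero (I : R * R) : starts_at_zero I -> contains I 0.
Proof. by case/andP => /eqP I0 ge0_I; rewrite /contains I0 lexx. Qed.

Lemma valid_input_starts_at_zero (s : seq (R * R)) :
  all starts_at_zero s -> valid_input s.
Proof.
move=> zero_s; rewrite /valid_input.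
have -> : all (fun I : R * R => I.1 <= I.2) s.
  by apply/allP => I /(allP zero_s) /andP[/eqP ->].
case: s zero_s => //= I s /andP[/andP[/eqP I0 _]].
elim: s I I0 => //= J s IHs I I0 /andP[/andP[/eqP J0 _] zero_s].
by rewrite I0 J0 lexx /= (IHs J).
Qed.

End StartAtZero.
Arguments starts_at_zero {R}.

Section Adversary.
Variables (R : realType) (k : nat) (alg : online_algorithm R k) (c : 'I_k).

Lemma online_coloring_rcons (s : seq (R * R)) I :
  online_coloring alg (rcons s I) =
  rcons (online_coloring alg s) (alg (rcons s I)).
Proof.
rewrite /online_coloring size_rcons -addn1 iotaD map_cat /= add0n -!cats1.
congr (_ ++ [:: alg _]); last by rewrite take_oversize // size_cat addn1.
by apply/eq_in_map => i; rewrite mem_iota add0n => /= lt_i; rewrite takel_cat.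
Qed.

Lemma size_online_coloring (s : seq (R * R)) :
  size (online_coloring alg s) = size s.
Proof. by rewrite size_map size_iota. Qed.

(* The state is the input so far and the current bisection interval (f, p). *)
Fixpoint adversary (n : nat) : seq (R * R) * R * R :=
  if n is n'.+1 then
    let: (s, f, p) := adversary n' in
    let r := (f + p) / 2 in
    let s' := rcons s (0, r) in
    if alg s' == c then (s', f, r) else (s', r, p)
  else ([::], 0, 1).

Definition separated_by (f p : R) (q : (R * R) * 'I_k) : bool :=
  starts_at_zero q.1 && if q.2 == c then p <= q.1.2 else q.1.2 <= f.

Lemma separated_by_widen (f f' p p' : R) q : f <= f' -> p' <= p ->
  separated_by f p q -> separated_by f' p' q.
Proof.
move=> le_f le_p /andP[zero_q]; rewrite /separated_by zero_q.
by case: ifP => _ le; lra.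
Qed.

Lemma adversary_invariant n :
  let: (s, f, p) := adversary n in
  [/\ size s = n, 0 <= f, f < p, all starts_at_zero s &
      all (separated_by f p) (zip s (online_coloring alg s))].
Proof.
elim: n => [|n IHn] /=; first by split=> //; lra.
case: (adversary n) IHn => [[s f] p] [size_s ge0_f lt_fp zero_s sep_s] /=.
set r := (f + p) / 2.
have lt_fr : f < r by rewrite /r; lra.
have lt_rp : r < p by rewrite /r; lra.
have zero_r : starts_at_zero (0, r) by rewrite /starts_at_zero eqxx /=; lra.
case: ifP => alg_c /=;
  rewrite online_coloring_rcons zip_rcons ?size_online_coloring //;
  rewrite size_rcons size_s !all_rcons zero_r zero_s /separated_by /= alg_c zero_r.
- split=> //; rewrite lexx /=.
  by apply: sub_all sep_s => q; apply: separated_by_widen; lra.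
- split=> //; rewrite ?lexx /=; first lra.
  by apply: sub_all sep_s => q; apply: separated_by_widen; lra.
Qed.

Lemma separated_by_contains (f p : R) q : 0 <= f -> f < p ->
  separated_by f p q -> contains q.1 p = (q.2 == c).
Proof.
move=> ge0_f lt_fp /andP[/andP[/eqP q0 _]]; rewrite /contains q0.
case: (q.2 == c) => [le_p | le_f]; first by rewrite le_p ltW ?(le_lt_trans ge0_f).
by rewrite (lt_geF (le_lt_trans le_f lt_fp)) andbF.
Qed.

End Adversary.

Theorem theorem8 (R : realType) (k : nat) (hk : (2 <= k)%N)
  (alg : online_algorithm R k) (M : nat) :
  exists s : seq (R * R),
    valid_input s /\ imbalance_gt s (online_coloring alg s) M.
Proof.
pose c : 'I_k := Ordinal (ltnW hk).
pose other : 'I_k := Ordinal hk.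
have := adversary_invariant alg c (k * (2 * M)).+1.
case: (adversary alg c _) => [[s f] p] [size_s ge0_f lt_fp zero_s sep_s].
exists s; split; first exact: valid_input_starts_at_zero.
apply: (imbalance_gt_separated (x := 0) (y := p) (i := c) (j := other)).
- exact: size_online_coloring.
- by rewrite size_s.
- by [].
- by apply/allP => I /(allP zero_s) /contains_starts_at_zero.
- by move=> q /(allP sep_s); apply: (separated_by_contains ge0_f lt_fp).
Qed.
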